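(* Let $G$ be a proper interval graph with a proper vertex ordering $<$ and let $M$ be a uniquely restricted matching in $G$ starting with an edge $e'\in E(G)$. Let $e\in E(G)$ be such that $r(e)<l(e')$ and $\{e,e'\}$ is a uniquely restricted matching in $G$. Then $\{e\}\cup M$ is a uniquely restricted matching in $G$ starting with $e$.
   Context: Graphs are finite, simple, undirected. A proper interval graph is a graph with an interval representation (closed real intervals, adjacency iff intersection for distinct vertices) in which no interval strictly contains another. An ordering $<$ of $V(G)$ is a proper vertex ordering if for all $u<v<w$, $uw\in E(G)$ implies $uv,vw\in E(G)$. For an edge $e=uv$, $l(e)=\min_<\{u,v\}$ and $r(e)=\max_<\{u,v\}$. A matching is a set of pairwise vertex-disjoint edges; it is uniquely restricted if no other matching of $G$ matches exactly the same vertex set. For a uniquely restricted matching $M$ in such $G$, its edges can be labelled $e_1,\dots,e_{|M|}$ with $l(e_1)<r(e_1)<l(e_2)<r(e_2)<\cdots<l(e_{|M|})<r(e_{|M|})$, and $M$ is said to start with $e_1$ (the edge of $M$ with the $<$-smallest $l$-value). *)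

From Stdlib Require Import Reals.
From mathcomp Require Import all_boot.
Set Implicit Arguments. Unset Strict Implicit. Unset Printing Implicit Defensive.

Section Defs.
Variable T : finType.

Definition simple_graph (G : rel T) : Prop :=
  (forall u v, G u v = G v u) /\ (forall u, ~~ G u u).

Definition proper_interval_graph (G : rel T) : Prop :=
  exists (a b : T -> R),
    (forall v, Rle (a v) (b v)) /\
    (forall u v, u <> v ->
       (G u v <-> exists x : R, (Rle (a u) x /\ Rle x (b u)) /\ (Rle (a v) x /\ Rle x (b v)))) /\
    (forall u v, ~ ((forall x : R, (Rle (a u) x /\ Rle x (b u)) -> (Rle (a v) x /\ Rle x (b v))) /\
                    exists x : R, (Rle (a v) x /\ Rle x (b v)) /\ ~ (Rle (a u) x /\ Rle x (b u)))).

(* A linear ordering of V(G) is given by an injective rank function pos;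
   u < v iff pos u < pos v. *)
Definition proper_vertex_ordering (G : rel T) (pos : T -> nat) : Prop :=
  injective pos /\
  forall u v w, pos u < pos v -> pos v < pos w -> G u w -> G u v /\ G v w.

Definition is_edge (G : rel T) (f : {set T}) : Prop :=
  exists u v, G u v /\ f = [set u; v].

Definition matching (G : rel T) (M : {set {set T}}) : Prop :=
  (forall f, f \in M -> is_edge G f) /\
  (forall f g, f \in M -> g \in M -> f != g -> [disjoint f & g]).

Definition uniquely_restricted (G : rel T) (M : {set {set T}}) : Prop :=
  matching G M /\
  forall M', matching G M' -> cover M' = cover M -> M' = M.

(* l(f) <= l(g) for all g in M, with f in M (l = pos-minimal endpoint). *)
Definition starts_with (pos : T -> nat) (M : {set {set T}}) (f : {set T}) : Prop :=
  f \in M /\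
  forall g, g \in M -> forall y, y \in g -> exists2 x, x \in f & pos x <= pos y.

(* r(f) < l(g): every endpoint of f precedes every endpoint of g. *)
Definition edge_before (pos : T -> nat) (f g : {set T}) : Prop :=
  forall x y, x \in f -> y \in g -> pos x < pos y.

End Defs.

From Stdlib Require Import Reals.
From mathcomp Require Import all_boot.
Set Implicit Arguments. Unset Strict Implicit. Unset Printing Implicit Defensive.

(* A uniquely restricted matching has no alternating 4-cycle: two of its edges
   ab, cd with ac, bd in E(G) could be exchanged for ac, bd.  Write e = uv and
   e' = ab with u < v < a < b.  By the umbrella property of the ordering, a vertex
   of M strictly between a and b would close such a 4-cycle with ab, so every
   vertex of M other than a lies at or beyond b, and a vertex x < b adjacent to it
   is adjacent to b.  Now let M' match the vertices of e and M.  If u and v were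
   not matched to each other, their partners would be distinct vertices of M, at
   most one of them a, and the umbrella property would give ua, vb in E(G): an
   alternating 4-cycle for the uniquely restricted matching {e, e'}.  So e is in
   M', and M' - e = M because M is uniquely restricted. *)

Lemma disjoint_set2 (T : finType) (a c : T) (B : {set T}) :
  [disjoint [set a; c] & B] = (a \notin B) && (c \notin B).
Proof. by rewrite -setI_eq0 setIUl setU_eq0 !setI_eq0 !disjoints1. Qed.

Lemma cover_set2 (T : finType) (A B : {set T}) : cover [set A; B] = A :|: B.
Proof. by rewrite /cover bigcup_setU !big_set1. Qed.

Lemma trivIset_disjoint_cover (T : finType) (P A B : {set {set T}}) :
  trivIset P -> A \subset P -> B \subset P -> [disjoint A & B] ->
  [disjoint cover A & cover B].
Proof.
move=> /trivIsetP tiP /subsetP sAP /subsetP sBP dAB.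
apply: bigcup_disjoint => g gB; rewrite disjoint_sym.
apply: bigcup_disjoint => f fA; apply: tiP; [exact: sBP | exact: sAP |].
by apply: contraTneq gB => ->; rewrite (disjointFr dAB fA).
Qed.

Section Matchings.
Variables (T : finType) (G : rel T).
Hypothesis simpleG : simple_graph G.
Implicit Types (M N R : {set {set T}}) (f g : {set T}).

Lemma matchingE M : matching G M <-> {in M, forall f, is_edge G f} /\ trivIset M.
Proof. by split=> -[edgeM tiM]; split=> //; apply/trivIsetP. Qed.

Lemma edge_neq x y : G x y -> x != y.
Proof. by apply: contraTneq => ->; rewrite (negbTE (simpleG.2 y)). Qed.

Lemma is_edge_adj x y : is_edge G [set x; y] -> G x y.
Proof.
move=> [p [q [Gpq exy]]].
have nxy : x != y by move: (cards2 x y); rewrite exy cards2 (edge_neq Gpq); case: (x != y).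
move: nxy; have : y \in [set p; q] by rewrite -exy set22.
have : x \in [set p; q] by rewrite -exy set21.
by rewrite !inE => /orP[]/eqP-> /orP[]/eqP-> //; rewrite ?eqxx // simpleG.1.
Qed.

Lemma is_edge_pick f x : is_edge G f -> x \in f -> exists2 y, G x y & f = [set x; y].
Proof.
move=> [p [q [Gpq ->]]] /set2P[->|->]; first by exists q.
by exists p; rewrite 1?setUC 1?simpleG.1.
Qed.

Lemma matching1 f : is_edge G f -> matching G [set f].
Proof. by move=> ef; apply/matchingE; split=> [g /set1P -> //|]; exact: trivIset1. Qed.

Lemma matchingS M N : N \subset M -> matching G M -> matching G N.
Proof.
move=> /subsetP sNM /matchingE[edgeM tiM]; apply/matchingE.
by split=> [f /sNM /edgeM //|]; apply: trivIsetS tiM; apply/subsetP.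
Qed.

Lemma matchingU M N :
  matching G M -> matching G N -> [disjoint cover M & cover N] -> matching G (M :|: N).
Proof.
move=> /matchingE[edgeM tiM] /matchingE[edgeN tiN] dMN; apply/matchingE.
by split=> [f /setUP[/edgeM|/edgeN] //|]; exact: trivIsetU.
Qed.

Lemma matching_partner M x :
  matching G M -> x \in cover M -> exists2 y, G x y & [set x; y] \in M.
Proof.
move=> /matchingE[edgeM _] xM; have fM := pblock_mem xM.
have [y Gxy ef] := is_edge_pick (edgeM _ fM) (etrans (mem_pblock M x) xM).
by exists y; rewrite -?ef.
Qed.

Lemma matching_eq M f g x :
  matching G M -> f \in M -> g \in M -> x \in f -> x \in g -> f = g.
Proof.
move=> /matchingE[_ tiM] fM gM xf xg.
by rewrite -(def_pblock tiM fM xf) (def_pblock tiM gM xg).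
Qed.

Lemma matching_mate M x y z :
  matching G M -> [set x; y] \in M -> [set y; z] \in M -> x = z.
Proof.
move=> mM xyM yzM; have nxy := edge_neq (is_edge_adj (mM.1 _ xyM)).
have : x \in [set y; z] by rewrite -(matching_eq mM xyM yzM (set22 x y) (set21 y z)) set21.
by rewrite !inE (negbTE nxy) => /eqP.
Qed.

Lemma matching_exchange M R N :
  matching G M -> R \subset M -> matching G N -> cover N = cover R ->
  matching G (N :|: (M :\: R)) /\ cover (N :|: (M :\: R)) = cover M.
Proof.
move=> mM sRM mN covN.
have tiM : trivIset M by case/matchingE: mM.
have dR : [disjoint cover R & cover (M :\: R)].
  apply: trivIset_disjoint_cover tiM sRM (subsetDl _ _) _.
  by rewrite disjoint_sym disjoints_subset subsetDr.
have covM : cover M = cover R :|: cover (M :\: R).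
  by rewrite /cover -bigcup_setU -{1}(setID M R) (setIidPr sRM).
split; first by apply: matchingU mN (matchingS (subsetDl _ _) mM) _; rewrite covN.
by rewrite /cover bigcup_setU -!/(cover _) covN covM.
Qed.

Lemma ur_no_alternating_square M a b c d :
  uniquely_restricted G M -> [set a; b] \in M -> [set c; d] \in M ->
  [set a; b] != [set c; d] -> G a c -> G b d -> False.
Proof.
move=> [mM urM] abM cdM neq Gac Gbd.
have nab := edge_neq (is_edge_adj (mM.1 _ abM)).
have ncd := edge_neq (is_edge_adj (mM.1 _ cdM)).
have /trivIsetP tiM : trivIset M by case/matchingE: mM.
move: (tiM _ _ abM cdM neq); rewrite disjoint_set2 !inE !negb_or.
case/andP=> /andP[nac nad] /andP[nbc nbd].
have mN : matching G [set [set a; c]; [set b; d]].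
  apply: matchingU; [apply: matching1; by exists a, c | apply: matching1; by exists b, d |].
  by rewrite !cover1 disjoint_set2 !inE !negb_or nab nad (eq_sym c b) nbc ncd.
have sRM : [set [set a; b]; [set c; d]] \subset M by rewrite subUset !sub1set abM cdM.
have covN : cover [set [set a; c]; [set b; d]] = cover [set [set a; b]; [set c; d]].
  by rewrite !cover_set2 setUACA.
have [mM' covM'] := matching_exchange mM sRM mN covN.
have acM : [set a; c] \in M by rewrite -(urM _ mM' covM') in_setU setU11.
have : c \in [set a; b] by rewrite -(matching_eq mM acM abM (set21 a c) (set21 a b)) set22.
by rewrite !inE !(eq_sym c) (negbTE nac) (negbTE nbc).
Qed.

End Matchings.

Section ProperVertexOrdering.
Variables (T : finType) (G : rel T) (pos : T -> nat).
Hypotheses (simpleG : simple_graph G) (pvoG : proper_vertex_ordering G pos).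
Implicit Type f : {set T}.

Let pos_inj : injective pos := pvoG.1.

Lemma umbrella_l x y z : pos x < pos y -> pos y <= pos z -> G x z -> G x y.
Proof.
move=> xy; rewrite leq_eqVlt => /orP[/eqP/pos_inj-> // | yz] Gxz.
exact: (pvoG.2 _ _ _ xy yz Gxz).1.
Qed.

Lemma umbrella_r x y z : pos x <= pos y -> pos y < pos z -> G x z -> G y z.
Proof.
rewrite leq_eqVlt => /orP[/eqP/pos_inj-> // | xy] yz Gxz.
exact: (pvoG.2 _ _ _ xy yz Gxz).2.
Qed.

Lemma is_edge_orient f :
  is_edge G f -> exists u v, [/\ G u v, pos u < pos v & f = [set u; v]].
Proof.
move=> [p [q [Gpq ->]]].
case: (ltngtP (pos p) (pos q)) => [pq | qp | /pos_inj epq]; first by exists p, q.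
  by exists q, p; rewrite setUC simpleG.1.
by move: (edge_neq simpleG Gpq); rewrite epq eqxx.
Qed.

Section FirstEdge.
Variables (M : {set {set T}}) (a b : T).
Hypotheses (urM : uniquely_restricted G M) (startM : starts_with pos M [set a; b]).
Hypothesis ab : pos a < pos b.

Lemma first_edge_cover_ge y : y \in cover M -> pos a <= pos y.
Proof.
move=> /bigcupP[g gM yg]; have [x] := startM.2 g gM y yg.
by rewrite !inE => /orP[]/eqP-> // /(leq_trans (ltnW ab)).
Qed.

Lemma first_edge_gap y : y \in cover M -> pos a < pos y -> pos b <= pos y.
Proof.
move=> yM ay; rewrite leqNgt; apply/negP => yb.
have [mM _] := urM; have abM := startM.1.
have [d Gyd ydM] := matching_partner simpleG mM yM.
have ne : [set a; b] != [set y; d].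
  apply/eqP => eab; move: (set21 y d); rewrite -eab !inE.
  by case/orP=> /eqP eya; move: ay yb; rewrite eya ltnn.
have dab : d \notin [set a; b].
  by apply: contra ne => dab; apply/eqP; exact: matching_eq mM abM ydM dab (set22 y d).
have ad : pos a < pos d.
  rewrite ltn_neqAle first_edge_cover_ge ?andbT; last first.
    by apply/bigcupP; exists [set y; d]; rewrite ?set22.
  by apply: contraNneq dab => /pos_inj <-; rewrite set21.
have Gab : G a b := is_edge_adj simpleG (mM.1 _ abM).
have Gay : G a y := (pvoG.2 _ _ _ ay yb Gab).1.
have Gbd : G b d.
  case: (ltngtP (pos d) (pos b)) => [db | bd | /pos_inj edb].
  - by rewrite simpleG.1; exact: (pvoG.2 _ _ _ ad db Gab).2.
  - exact: (pvoG.2 _ _ _ yb bd Gyd).2.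
  - by move: dab; rewrite edb set22.
exact: (ur_no_alternating_square simpleG urM abM ydM ne Gay Gbd).
Qed.

Lemma first_edge_adj x t : pos x < pos b -> t \in cover M -> G x t -> t = a \/ G x b.
Proof.
move=> xb tM Gxt; move: (first_edge_cover_ge tM).
rewrite leq_eqVlt => /orP[/eqP/pos_inj <- | lt_at]; [by left | right].
exact: umbrella_l xb (first_edge_gap tM lt_at) Gxt.
Qed.

Section LeftEdge.
Variables u v : T.
Hypotheses (Guv : G u v) (uv : pos u < pos v) (va : pos v < pos a).

Lemma starts_with_left_edge : starts_with pos ([set u; v] |: M) [set u; v].
Proof.
split=> [|g]; first exact: setU11.
case/setU1P=> [-> | gM] y yg; exists u; rewrite ?set21 //.
  by move: yg; rewrite !inE => /orP[]/eqP-> //; exact: ltnW.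
apply: leq_trans (ltnW (ltn_trans uv va)) (first_edge_cover_ge _).
by apply/bigcupP; exists g.
Qed.

Hypothesis no_cross : ~ (G u a /\ G v b).

Lemma left_edge_disjoint_cover : [disjoint [set u; v] & cover M].
Proof.
rewrite disjoint_set2; apply/andP; split; apply/negP => /first_edge_cover_ge.
  by rewrite leqNgt (ltn_trans uv va).
by rewrite leqNgt va.
Qed.

Lemma left_edge_kept M' :
  matching G M' -> cover M' = [set u; v] :|: cover M -> [set u; v] \in M'.
Proof.
move=> mM' covM'.
have inM' x : x \in [set u; v] -> x \in cover M' by move=> xuv; rewrite covM' in_setU xuv.
have [w Guw uwM'] := matching_partner simpleG mM' (inM' u (set21 u v)).
have [z Gvz vzM'] := matching_partner simpleG mM' (inM' v (set22 u v)).
have vb : pos v < pos b := ltn_trans va ab.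
have ub : pos u < pos b := ltn_trans uv vb.
case: (eqVneq w v) => [<- // | nwv].
have inM x y : [set x; y] \in M' -> y \notin [set u; v] -> y \in cover M.
  move=> xyM' yuv; have : y \in cover M' by apply/bigcupP; exists [set x; y]; rewrite ?set22.
  by rewrite covM' in_setU (negbTE yuv).
have wM : w \in cover M.
  by apply: (inM u) => //; rewrite !inE negb_or nwv andbT eq_sym (edge_neq simpleG Guw).
have zM : z \in cover M.
  apply: (inM v) => //; rewrite !inE negb_or (eq_sym z v) (edge_neq simpleG Gvz) andbT.
  apply: contra nwv => /eqP zu; rewrite zu in vzM'.
  by rewrite (matching_mate simpleG mM' vzM' uwM') eqxx.
have [wa | Gub] := first_edge_adj ub wM Guw; last first.
  case: no_cross; split; last exact: umbrella_r (ltnW uv) vb Gub.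
  exact: (pvoG.2 _ _ _ (ltn_trans uv va) ab Gub).1.
have [za | Gvb] := first_edge_adj vb zM Gvz.
  rewrite wa in uwM'; rewrite za setUC in vzM'.
  by move: uv; rewrite (matching_mate simpleG mM' uwM' vzM') ltnn.
by case: no_cross; rewrite -wa.
Qed.

Lemma ur_setU1_left_edge : uniquely_restricted G ([set u; v] |: M).
Proof.
have [mM urMeq] := urM.
have covE : cover ([set u; v] |: M) = [set u; v] :|: cover M.
  by rewrite /cover bigcup_setU big_set1.
split=> [|M' mM' covM'].
  apply: matchingU (matching1 _) mM _; first by exists u, v.
  by rewrite cover1 left_edge_disjoint_cover.
have uvM' := left_edge_kept mM' (etrans covM' covE).
rewrite -(setD1K uvM'); congr (_ |: _); apply: urMeq; first exact: matchingS (subD1set _ _) mM'.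
have tiM' : trivIset M' by case/matchingE: mM'.
rewrite coverD1 // covM' covE setDUl setDv set0U; apply/setDidPl.
by rewrite disjoint_sym left_edge_disjoint_cover.
Qed.

End LeftEdge.

End FirstEdge.
End ProperVertexOrdering.

Theorem corollary1 (T : finType) (G : rel T) (pos : T -> nat)
  (M : {set {set T}}) (e e' : {set T}) :
  simple_graph G ->
  proper_interval_graph G ->
  proper_vertex_ordering G pos ->
  uniquely_restricted G M ->
  starts_with pos M e' ->
  is_edge G e -> is_edge G e' ->
  edge_before pos e e' ->
  uniquely_restricted G [set e; e'] ->
  uniquely_restricted G (e |: M) /\ starts_with pos (e |: M) e.
Proof.
move=> simpleG _ pvoG urM startM Ee Ee' before ur_ee'.
have [u [v [Guv uv eE]]] := is_edge_orient simpleG pvoG Ee.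
have [a [b [_ ab e'E]]] := is_edge_orient simpleG pvoG Ee'.
subst e e'.
have va : pos v < pos a by apply: before; rewrite ?set21 ?set22.
have ne : [set u; v] != [set a; b].
  by apply/eqP => E; move: (before v v (set22 u v)); rewrite -E set22 ltnn => /(_ isT).
have no_cross : ~ (G u a /\ G v b).
  case=> Gua Gvb.
  exact: (ur_no_alternating_square simpleG ur_ee' (set21 _ _) (set22 _ _) ne Gua Gvb).
split; first exact: (ur_setU1_left_edge simpleG pvoG urM startM ab Guv uv va no_cross).
exact: (starts_with_left_edge startM ab uv va).
Qed.
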